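(* Let $R$ be an associative ring with identity and $M$ a left $R$-module which is projective in $\sigma[M]$. Suppose that for every fully invariant submodule $N\leq M$ the factor module $M/N$ has finite uniform dimension. Then the topological space $LgSpec(M)$ is weakly scattered.
   Context: $\Lambda^{fi}(M)$ is the set of fully invariant submodules of $M$. For $N,L\leq M$, $N_ML=\sum\{f(N)\mid f\in\mathrm{Hom}_R(M,L)\}$. $LgSpec(M)$ is the set of submodules $P\neq M$ such that for all $N,L\in\Lambda^{fi}(M)$, $N_ML\subseteq P$ implies $N\subseteq P$ or $L\subseteq P$, with the topology whose open sets are $\{P\in LgSpec(M)\mid N\nsubseteq P\}$, $N\in\Lambda^{fi}(M)$. A topological space $S$ is weakly scattered if every non-empty closed subset $F$ contains a point $x$ that is weakly isolated in $F$, i.e. there is an open set $U$ with $x\in U\cap F\subseteq\overline{\{x\}}$. *)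

From mathcomp Require Import all_boot all_order all_algebra.
Set Implicit Arguments. Unset Strict Implicit. Unset Printing Implicit Defensive.
Import GRing.Theory.
Local Open Scope ring_scope.

Section ModuleDefs.
Variable R : pzRingType.

Definition subset_of (T : Type) (A B : T -> Prop) := forall x, A x -> B x.

Definition is_hom (A B : lmodType R) (f : A -> B) : Prop :=
  forall (a : R) (x y : A), f (a *: x + y) = a *: f x + f y.

Definition submod (M : lmodType R) (N : M -> Prop) : Prop :=
  N 0 /\ (forall x y, N x -> N y -> N (x + y)) /\
  (forall (a : R) x, N x -> N (a *: x)).

Definition span (M : lmodType R) (S : M -> Prop) : M -> Prop :=
  fun x => forall P : M -> Prop, submod P -> subset_of S P -> P x.

Definition fully_invariant (M : lmodType R) (N : M -> Prop) : Prop :=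
  submod N /\ forall f : M -> M, is_hom f -> forall x, N x -> N (f x).

(* N_M L = sum { f(N) | f in Hom_R(M, L) } *)
Definition prodM (M : lmodType R) (N L : M -> Prop) : M -> Prop :=
  span (fun y => exists f : M -> M, is_hom f /\ (forall x, L (f x)) /\
                  exists x, N x /\ y = f x).

Definition LgSpec (M : lmodType R) (P : M -> Prop) : Prop :=
  submod P /\ ~ (forall x, P x) /\
  forall N L : M -> Prop, fully_invariant N -> fully_invariant L ->
    subset_of (prodM N L) P -> subset_of N P \/ subset_of L P.

Definition LgSpec_pt (M : lmodType R) := {P : M -> Prop | LgSpec P}.

Definition LgSpec_open (M : lmodType R) (U : LgSpec_pt M -> Prop) : Prop :=
  exists N : M -> Prop, fully_invariant N /\
    forall p, U p <-> ~ subset_of N (proj1_sig p).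

Definition M_generated (M K : lmodType R) : Prop :=
  forall k : K, span (fun y => exists f : M -> K, is_hom f /\
                         exists x, y = f x) k.

Definition in_sigma (M N : lmodType R) : Prop :=
  exists (K : lmodType R) (i : N -> K), M_generated M K /\ is_hom i /\
    injective i.

Definition projective_in_sigma (M : lmodType R) : Prop :=
  forall (A B : lmodType R), in_sigma M A ->
  forall g : A -> B, is_hom g -> (forall b, exists a, g a = b) ->
  forall h : M -> B, is_hom h ->
  exists f : M -> A, is_hom f /\ forall x, g (f x) = h x.

(* M/N has finite uniform dimension: M/N contains no infinite direct sum of
   nonzero submodules; stated through the correspondence between submodules
   of M/N and submodules K of M with N <= K (K/N nonzero iff K not <= N;
   (K_n/N)_n independent iff K_n /\ sum_{m<>n} K_m <= N). *)
Definition quot_finite_udim (M : lmodType R) (N : M -> Prop) : Prop :=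
  ~ exists K : nat -> M -> Prop,
      (forall n, submod (K n) /\ subset_of N (K n) /\ ~ subset_of (K n) N) /\
      (forall n x, K n x -> span (fun y => exists m, m <> n /\ K m y) x -> N x).

End ModuleDefs.

Section Topo.
Variable X : Type.
Variable is_open : (X -> Prop) -> Prop.

Definition is_closed (F : X -> Prop) : Prop :=
  exists U, is_open U /\ forall x, F x <-> ~ U x.

Definition closure1 (x : X) : X -> Prop :=
  fun y => forall F, is_closed F -> F x -> F y.

Definition weakly_isolated (F : X -> Prop) (x : X) : Prop :=
  F x /\ exists U, is_open U /\ U x /\
    forall y, U y -> F y -> closure1 x y.

Definition weakly_scattered : Prop :=
  forall F, is_closed F -> (exists x, F x) -> exists x, weakly_isolated F x.
End Topo.

From Pilot Require Import Defs.
From mathcomp Require Import all_boot all_order all_algebra.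
From Stdlib Require Import Classical ClassicalEpsilon.
Set Implicit Arguments. Unset Strict Implicit. Unset Printing Implicit Defensive.
Import GRing.Theory.
Local Open Scope ring_scope.

(* Closed sets of LgSpec(M) are the V(N), open ones the D(N), N fully invariant.
   If a nonempty closed set F had no weakly isolated point, no trace F :&: D(L)
   could be irreducible: otherwise the largest fully invariant submodule lying
   in all its points would itself be a point of LgSpec(M), generic for the
   trace and hence weakly isolated in F, with D(L) as witness. So every
   nonempty trace splits into two disjoint nonempty traces, and iterating
   gives fully invariant A_0, A_1, ... with nonempty, pairwise disjoint traces
   on F. Each point of F then contains all A_n but at most one, so the
   A_n + I, with I the fully invariant core of F, are independent modulo I:
   M/I has infinite uniform dimension. *)

Section Homomorphisms.
Variables (R : pzRingType) (A B : lmodType R) (f : A -> B).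
Hypothesis hom_f : is_hom f.

Lemma is_homD x y : f (x + y) = f x + f y.
Proof. by have := hom_f 1 x y; rewrite !scale1r. Qed.

Lemma is_hom0 : f 0 = 0.
Proof. by apply: (@addrI _ (f 0)); rewrite -is_homD !addr0. Qed.

Lemma is_homZ a x : f (a *: x) = a *: f x.
Proof. by have := hom_f a x 0; rewrite is_hom0 !addr0. Qed.

End Homomorphisms.

Section FullyInvariant.
Variables (R : pzRingType) (M : lmodType R).
Implicit Types (A B P S : M -> Prop).

Definition capsub A B : M -> Prop := fun m => A m /\ B m.

Definition addsub A B : M -> Prop := fun m => exists a b, [/\ A a, B b & m = a + b].

Lemma addsub_subset A B P :
  submod P -> subset_of A P -> subset_of B P -> subset_of (addsub A B) P.
Proof. by move=> [_ [PD _]] sAP sBP _ [a [b [Aa Bb ->]]]; apply: PD; auto. Qed.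

Lemma addsub_subl A B : submod B -> subset_of A (addsub A B).
Proof. by move=> [B0 _] a Aa; exists a, 0; rewrite addr0. Qed.

Lemma addsub_subr A B : submod A -> subset_of B (addsub A B).
Proof. by move=> [A0 _] b Bb; exists 0, b; rewrite add0r. Qed.

Lemma span_submod S : submod (Defs.span S).
Proof.
split; [|split].
- by move=> P [P0 _].
- move=> x y Sx Sy P subP sSP; have [_ [PD _]] := subP.
  by apply: PD; [apply: Sx | apply: Sy].
- move=> a x Sx P subP sSP; have [_ [_ PZ]] := subP.
  by apply: PZ; apply: Sx.
Qed.

Lemma span_subset S P : submod P -> subset_of S P -> subset_of (Defs.span S) P.
Proof. by move=> subP sSP x; apply. Qed.

Lemma fully_invariant_span S :
  (forall f : M -> M, is_hom f -> forall y, S y -> S (f y)) ->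
  fully_invariant (Defs.span S).
Proof.
move=> fS; split; first exact: span_submod.
move=> f hom_f x Sx; have [S0 [SD SZ]] := span_submod S.
apply: (Sx (fun z => Defs.span S (f z))).
- split; [|split].
  + by rewrite is_hom0.
  + by move=> u v Su Sv; rewrite is_homD //; apply: SD.
  + by move=> a u Su; rewrite is_homZ //; apply: SZ.
- by move=> y Sy P _ sSP; apply/sSP/fS.
Qed.

Lemma fully_invariant0 : fully_invariant (fun m : M => m = 0).
Proof.
split; [split; [|split]|] => //.
- by move=> x y -> ->; rewrite addr0.
- by move=> a x ->; rewrite scaler0.
- by move=> f hom_f x ->; rewrite is_hom0.
Qed.

Lemma fully_invariantT : fully_invariant (fun _ : M => True).
Proof. by []. Qed.

Lemma submodI A B : submod A -> submod B -> submod (capsub A B).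
Proof.
move=> [A0 [AD AZ]] [B0 [BD BZ]]; split; [|split] => //.
- by move=> x y [Ax Bx] [Ay By]; split; [apply: AD | apply: BD].
- by move=> a x [Ax Bx]; split; [apply: AZ | apply: BZ].
Qed.

Lemma fully_invariantI A B :
  fully_invariant A -> fully_invariant B -> fully_invariant (capsub A B).
Proof.
move=> [subA Af] [subB Bf]; split; first exact: submodI.
by move=> f hom_f x [Ax Bx]; split; [apply: Af | apply: Bf].
Qed.

Lemma fully_invariantD A B :
  fully_invariant A -> fully_invariant B -> fully_invariant (addsub A B).
Proof.
move=> [[A0 [AD AZ]] Af] [[B0 [BD BZ]] Bf].
split; [split; [|split]|].
- by exists 0, 0; rewrite addr0.
- move=> _ _ [a [b [Aa Bb ->]]] [a' [b' [Aa' Bb' ->]]].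
  by exists (a + a'), (b + b'); rewrite addrACA; split; [apply: AD | apply: BD |].
- move=> c _ [a [b [Aa Bb ->]]].
  by exists (c *: a), (c *: b); rewrite scalerDr; split; [apply: AZ | apply: BZ |].
- move=> f hom_f _ [a [b [Aa Bb ->]]].
  by exists (f a), (f b); rewrite is_homD //; split; [apply: Af | apply: Bf |].
Qed.

Lemma prodM_sub_capsub A B :
  fully_invariant A -> submod B -> subset_of (prodM A B) (capsub A B).
Proof.
move=> [subA Af] subB; apply: span_subset; first exact: submodI.
by move=> _ [f [hom_f [fB [x [Ax ->]]]]]; split; [apply: Af | apply: fB].
Qed.

End FullyInvariant.

Lemma disjoint_sequence (X T : Type) (dom : T -> X -> Prop) : T ->
  (forall t, exists u v, [/\ subset_of (dom u) (dom t), subset_of (dom v) (dom t)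
                           & forall x, dom u x -> dom v x -> False]) ->
  exists k : nat -> T, forall n m x, n <> m -> dom (k n) x -> dom (k m) x -> False.
Proof.
move=> t0 split_dom.
have split_pair t : exists uv : T * T,
    [/\ subset_of (dom uv.1) (dom t), subset_of (dom uv.2) (dom t)
      & forall x, dom uv.1 x -> dom uv.2 x -> False].
  by have [u [v uvP]] := split_dom t; exists (u, v).
have [g gP] := choice _ split_pair.
pose fix rest n := if n is n'.+1 then (g (rest n')).2 else t0.
have rest_mono n k : subset_of (dom (rest (n + k)%N)) (dom (rest n)).
  elim: k => [|k IHk] x; first by rewrite addn0.
  have [_ sub_rest _] := gP (rest (n + k)%N).
  by rewrite addnS => /sub_rest /IHk.
have disj n m x : (n < m)%N -> dom (g (rest n)).1 x -> dom (g (rest m)).1 x -> False.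
  move=> lt_nm un um; have [_ _ disj_n] := gP (rest n); apply: disj_n un _.
  have [sub_m _ _] := gP (rest m); move/sub_m: um.
  by rewrite -(subnKC lt_nm) => /rest_mono.
exists (fun n => (g (rest n)).1) => n m x /eqP; rewrite neq_ltn => /orP[] lt un um.
- exact: disj lt un um.
- exact: disj lt um un.
Qed.

Section LgSpecTopology.
Variables (R : pzRingType) (M : lmodType R).
Local Notation pt := (LgSpec_pt M).
Local Notation is_open := (@LgSpec_open R M).
Implicit Types (A B N Q : M -> Prop) (F G : pt -> Prop) (p : pt).

Definition LgV N p : Prop := subset_of N (proj1_sig p).

Definition LgD N p : Prop := ~ LgV N p.

Lemma LgSpec_pt_submod p : submod (proj1_sig p).
Proof. by case: (proj2_sig p). Qed.

Lemma LgDT p : LgD (fun _ => True) p.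
Proof.
by case: (proj2_sig p) => _ [ne_pM _] sub_pM; apply: ne_pM => x; apply: sub_pM.
Qed.

Lemma LgD_capsub A B p : fully_invariant A -> fully_invariant B ->
  LgD (capsub A B) p <-> LgD A p /\ LgD B p.
Proof.
move=> FIA FIB; split.
- by move=> nVAB; split=> VX; apply: nVAB => x [Ax Bx]; apply: VX.
- move=> [nVA nVB] VAB; have [_ [_ prime_p]] := proj2_sig p.
  have /prime_p[] // : subset_of (prodM A B) (proj1_sig p).
    by move=> x /(prodM_sub_capsub FIA FIB.1); apply: VAB.
Qed.

Lemma LgSpec_closedP F : is_closed is_open F ->
  exists2 N, fully_invariant N & forall p, F p <-> LgV N p.
Proof.
move=> [U [[N [FIN UP]] FP]]; exists N => // p; rewrite FP UP.
by split=> [/NNPP | VN]; last by apply.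
Qed.

Definition fi_core G : M -> Prop :=
  fun m => exists Q, [/\ fully_invariant Q, forall p, G p -> LgV Q p & Q m].

Lemma fully_invariant_core G : fully_invariant (fi_core G).
Proof.
split; [split; [|split]|].
- exists (fun m => m = 0); split=> //; first exact: fully_invariant0.
  by move=> p _ _ ->; case: (LgSpec_pt_submod p).
- move=> x y [Q1 [FIQ1 VQ1 Q1x]] [Q2 [FIQ2 VQ2 Q2y]].
  exists (addsub Q1 Q2); split; first exact: fully_invariantD.
    move=> p Gp; apply: addsub_subset; first exact: LgSpec_pt_submod.
    - exact: VQ1.
    - exact: VQ2.
  by exists x, y.
- move=> a x [Q [FIQ VQ Qx]]; exists Q; split=> //.
  by have [[_ [_ QZ]] _] := FIQ; apply: QZ.
- move=> f hom_f x [Q [FIQ VQ Qx]]; exists Q; split=> //.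
  by have [_ Qf] := FIQ; apply: Qf.
Qed.

Lemma core_LgV G p : G p -> LgV (fi_core G) p.
Proof. by move=> Gp x [Q [_ VQ Qx]]; apply: VQ Gp _ Qx. Qed.

Lemma sub_core G Q : fully_invariant Q -> (forall p, G p -> LgV Q p) ->
  subset_of Q (fi_core G).
Proof. by move=> FIQ VQ x Qx; exists Q. Qed.

Definition LgIrreducible G : Prop :=
  forall A B, fully_invariant A -> fully_invariant B ->
    (exists2 p, G p & LgD A p) -> (exists2 p, G p & LgD B p) ->
    exists p, [/\ G p, LgD A p & LgD B p].

Lemma meets_not_sub_core G N : fully_invariant N -> ~ subset_of N (fi_core G) ->
  exists2 p, G p & LgD N p.
Proof.
move=> FIN nsub; apply: NNPP => none; apply/nsub/sub_core => // p Gp.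
by apply: NNPP => nVN; apply: none; exists p.
Qed.

Lemma LgSpec_core G : (exists p, G p) -> LgIrreducible G -> LgSpec (fi_core G).
Proof.
move=> [p0 Gp0] irrG; split; first exact: (fully_invariant_core G).1.
split.
  by move=> coreT; apply: LgDT (fun x _ => core_LgV Gp0 (coreT x)).
move=> N L FIN FIL sub_prod; apply: NNPP => /not_or_and[nsubN nsubL].
have [p [Gp nVN nVL]] := irrG _ _ FIN FIL
  (meets_not_sub_core FIN nsubN) (meets_not_sub_core FIL nsubL).
have [_ [_ prime_p]] := proj2_sig p.
by case: (prime_p N L FIN FIL) => // x /sub_prod; apply: core_LgV.
Qed.

Lemma closure_core G (core_pt : LgSpec (fi_core G)) p :
  G p -> closure1 is_open (exist _ _ core_pt) p.
Proof.
move=> Gp F /LgSpec_closedP[N _ FP] /FP VN; apply/FP => x /VN.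
exact: core_LgV.
Qed.

Definition open_meeting F : Type :=
  {L : M -> Prop | fully_invariant L /\ exists p, F p /\ LgD L p}.

Definition trace F (t : open_meeting F) p : Prop := F p /\ LgD (proj1_sig t) p.

Lemma weakly_isolated_core F (t : open_meeting F) : is_closed is_open F ->
  LgIrreducible (trace t) -> exists x, weakly_isolated is_open F x.
Proof.
move=> closedF irr; have [FIL meet_t] := proj2_sig t.
have core_pt := LgSpec_core meet_t irr.
have [N FIN FP] := LgSpec_closedP closedF.
exists (exist _ _ core_pt); split.
  by apply/FP => /=; apply: sub_core => // p [/FP].
exists (LgD (proj1_sig t)); split; first by exists (proj1_sig t); split.
split.
  have [p0 tp0] := meet_t.
  by move=> VL; apply: tp0.2 => x /VL; apply: core_LgV.
by move=> p nVL Fp; apply: closure_core.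
Qed.

Lemma trace_capsub F (t : open_meeting F) A : fully_invariant A ->
  (exists2 p, trace t p & LgD A p) ->
  exists u : open_meeting F, forall p, trace u p <-> trace t p /\ LgD A p.
Proof.
move=> FIA [p0 tp0 nVA0]; have [FIL _] := proj2_sig t.
have traceI p : F p /\ LgD (capsub A (proj1_sig t)) p <-> trace t p /\ LgD A p.
  by rewrite LgD_capsub //; rewrite /trace; tauto.
by exists (exist _ (capsub A (proj1_sig t)) (conj (fully_invariantI FIA FIL)
  (ex_intro _ p0 ((traceI p0).2 (conj tp0 nVA0))))).
Qed.

Lemma not_LgIrreducible G : ~ LgIrreducible G ->
  exists A B, [/\ fully_invariant A, fully_invariant B,
    exists2 p, G p & LgD A p, exists2 p, G p & LgD B p
    & forall p, G p -> LgD A p -> LgD B p -> False].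
Proof.
move=> nirr; apply: NNPP => none; apply: nirr => A B FIA FIB meetA meetB.
apply: NNPP => disj; apply: none; exists A, B; split=> // p Gp nVA nVB.
by apply: disj; exists p.
Qed.

Lemma open_meeting_split F : is_closed is_open F ->
  ~ (exists x, weakly_isolated is_open F x) ->
  forall t : open_meeting F, exists u v : open_meeting F,
    [/\ subset_of (trace u) (trace t), subset_of (trace v) (trace t)
      & forall p, trace u p -> trace v p -> False].
Proof.
move=> closedF noiso t.
have [|A [B [FIA FIB meetA meetB disjAB]]] := @not_LgIrreducible (trace t).
  by move=> irr; apply/noiso/(weakly_isolated_core closedF irr).
have [u uP] := trace_capsub FIA meetA; have [v vP] := trace_capsub FIB meetB.
exists u, v; split.
- by move=> p /uP[].
- by move=> p /vP[].
- by move=> p /uP[tp nVA] /vP[_ nVB]; apply: disjAB tp nVA nVB.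
Qed.

Lemma not_quot_finite_udim_core F (A : nat -> open_meeting F) :
  (forall n m p, n <> m -> trace (A n) p -> trace (A m) p -> False) ->
  ~ quot_finite_udim (fi_core F).
Proof.
move=> disjA; apply; have FIcore := fully_invariant_core F.
pose K n := addsub (proj1_sig (A n)) (fi_core F).
have FIK n : fully_invariant (K n) := fully_invariantD (proj2_sig (A n)).1 FIcore.
exists K; split=> [n | n x Knx span_x].
  split; first exact: (FIK n).1.
  split; first exact: addsub_subr (proj2_sig (A n)).1.1.
  move=> subK; have [_ [p [Fp nVA]]] := proj2_sig (A n).
  by apply: nVA => y Ay; exact: (core_LgV Fp (subK y (addsub_subl FIcore.1 Ay))).
pose S y := exists m, m <> n /\ K m y.
have FIS : fully_invariant (Defs.span S).
  apply: fully_invariant_span => f hom_f y [m [ne_mn Kmy]].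
  by exists m; split=> //; apply: (FIK m).2.
suff : subset_of (capsub (K n) (Defs.span S)) (fi_core F) by apply; split.
apply: sub_core; first exact: fully_invariantI.
move=> p Fp; have Vcore : LgV (fi_core F) p := core_LgV Fp.
have subp := LgSpec_pt_submod p.
case: (classic (LgV (proj1_sig (A n)) p)) => [VAn | nVAn].
  by move=> z [Knz _]; apply: (addsub_subset subp VAn Vcore Knz).
move=> z [_ Sz]; apply: (span_subset subp _ Sz) => y [m [ne_mn Kmy]].
apply: (addsub_subset subp _ Vcore Kmy).
by apply: NNPP => nVAm; apply: disjA ne_mn (conj Fp nVAm) (conj Fp nVAn).
Qed.

End LgSpecTopology.

Theorem corollary4p33 (R : pzRingType) (M : lmodType R) :
  projective_in_sigma M ->
  (forall N : M -> Prop, fully_invariant N -> quot_finite_udim N) ->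
  weakly_scattered (@LgSpec_open R M).
Proof.
move=> _ udim F closedF [p0 Fp0]; apply: NNPP => noiso.
pose t0 : open_meeting F := exist _ (fun _ => True)
  (conj (@fully_invariantT R M) (ex_intro _ p0 (conj Fp0 (LgDT (p := p0))))).
have [A disjA] := disjoint_sequence t0 (open_meeting_split closedF noiso).
exact: not_quot_finite_udim_core disjA (udim _ (fully_invariant_core F)).
Qed.
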